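(* Let $q$ be a power of an odd prime $p$, let $a,b\in\mathbb{F}_q$ with $b\ne0$, and let $n\ge2$ be an integer. Let $r\ge0$ be such that $p^r$ divides $n+1$ but $p^{r+1}$ does not, and let $m\ge0$ be defined by $n+1=p^r(m+1)$. Assume $r\ge1$. Let $\mu\in\mathbb{F}_{q^2}$ with $\mu^2=-1$. If $m>0$, then $\hat C_n(a,b)$ is LCD if and only if $$a/b\notin\{-\mu/b+2,\,-\mu/b-2,\,\mu/b+2,\,\mu/b-2\}\cup\{-\mu/b+\theta^i+\theta^{-i}:1\le i\le m\}\cup\{\mu/b+\theta^i+\theta^{-i}:1\le i\le m\},$$ where $\theta\in\overline{\mathbb{F}}_q$ is a primitive $2(m+1)$-th root of unity. If $m=0$, then $\hat C_n(a,b)$ is LCD if and only if $a/b\notin\{-\mu/b+2,\,-\mu/b-2,\,\mu/b+2,\,\mu/b-2\}$.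
   Context: For $a,b\in\mathbb{F}_q$ and $n\ge 2$, $\hat T_n(a,b)$ denotes the $n\times n$ symmetric tridiagonal Toeplitz matrix over $\mathbb{F}_q$ with all diagonal entries equal to $a$, all entries on the first super- and sub-diagonals equal to $b$, and all other entries $0$. $\hat C_n(a,b)$ is the $[2n,n]$ linear code over $\mathbb{F}_q$ with generator matrix $[I_n\mid \hat T_n(a,b)]$. A linear code $C$ is LCD if $C\cap C^\perp=\{0\}$ (Euclidean dual). *)

From HB Require Import structures.
From mathcomp Require Import all_boot all_order all_algebra all_field.
Set Implicit Arguments. Unset Strict Implicit. Unset Printing Implicit Defensive.
Import GRing.Theory.
Local Open Scope ring_scope.

Definition hatT (F : ringType) (n : nat) (a b : F) : 'M[F]_n :=
  \matrix_(i < n, j < n)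
    if i == j then a
    else if (i.+1 == j :> nat) || (j.+1 == i :> nat) then b else 0.

(* Generator matrix [I_n | \hat T_n(a,b)] of the [2n,n] code \hat C_n(a,b). *)
Definition hatG (F : ringType) (n : nat) (a b : F) : 'M[F]_(n, n + n) :=
  row_mx 1%:M (hatT n a b).

(* The linear code generated (row space) by G is represented by G itself
   (mxalgebra row-space semantics); its Euclidean dual is the left kernel
   of G^T, i.e. { v | v *m G^T = 0 }. *)
Definition dual_code (F : fieldType) (k N : nat) (G : 'M[F]_(k, N)) : 'M[F]_N :=
  kermx G^T.

Definition is_LCD (F : fieldType) (k N : nat) (G : 'M[F]_(k, N)) : Prop :=
  (G :&: dual_code G)%MS = 0.

From HB Require Import structures.
From mathcomp Require Import all_boot all_order all_algebra all_field.
From mathcomp Require Import ring zify.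
Set Implicit Arguments. Unset Strict Implicit.
Import GRing.Theory.
Local Open Scope ring_scope.

(* Write U_k(c) = cheb c k for
   the sequence U_0 = 0, U_1 = 1, U_(k+2) = c U_(k+1) - U_k (a rescaled
   Chebyshev polynomial of the second kind).  The proof has four parts:
   1. Since G is row-free, the code is LCD iff G G^T = 1 + T^2 is invertible
      (Massey); over L, 1 + T^2 = (T + mu)(T - mu), so the code is LCD iff
      neither -mu nor mu is an eigenvalue of T.
   2. la is an eigenvalue of \hat T_n(al,be) iff U_(n+1)((al - la)/be) = 0:
      a left kernel vector of T - la follows the recurrence of U.
   3. In odd characteristic p, U_(k p^r) = U_k^(p^r) U_(p^r) (Frobenius on
      the companion matrix of the recurrence), and U_(p^r)(c) = 0 forces
      c = 2 or c = -2.  Hence for n + 1 = p^r (m + 1) the zeros of U_(n+1) are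
      +-2 and the zeros of U_(m+1).
   4. The zeros of U_(m+1) are the m distinct values theta^i + theta^-i,
      1 <= i <= m, for theta a primitive 2(m+1)-th root of unity.
   The theorem follows by rewriting a/b = -+mu/b + d as d = (a +- mu)/b. *)

(* The sequence U_k(c); [cheb c k] is U_(k-1)(c/2) for the classical U. *)
Fixpoint cheb {R : pzRingType} (c : R) (k : nat) : R :=
  match k with
  | 0 => 0
  | 1 => 1
  | (k'.+1 as k1).+1 => c * cheb c k1 - cheb c k'
  end.

Lemma cheb0 (R : pzRingType) (c : R) : cheb c 0 = 0. Proof. by []. Qed.
Lemma cheb1 (R : pzRingType) (c : R) : cheb c 1 = 1. Proof. by []. Qed.
Lemma chebSS (R : pzRingType) (c : R) k : cheb c k.+2 = c * cheb c k.+1 - cheb c k.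
Proof. by []. Qed.
(* The three equations above are the interface; unfolding further only hurts. *)
Arguments cheb : simpl never.

Lemma nat_ind2 (P : nat -> Prop) : P 0%N -> P 1%N ->
  (forall k, P k -> P k.+1 -> P k.+2) -> forall k, P k.
Proof.
move=> P0 P1 PSS k; suff: P k /\ P k.+1 by case.
by elim: k => [|k [IHk IHk1]]; split=> //; apply: PSS.
Qed.

Lemma rmorph_cheb (R S : pzRingType) (f : {rmorphism R -> S}) (c : R) k :
  f (cheb c k) = cheb (f c) k.
Proof.
elim/nat_ind2: k => [||k IHk IHk1]; rewrite ?rmorph0 ?rmorph1 //.
by rewrite !chebSS rmorphB rmorphM IHk IHk1.
Qed.

Section ChebyshevIdentities.
Variable R : comPzRingType.
Implicit Types (c x y : R).

Lemma cheb_rec_unique c (w : nat -> R) (N : nat) :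
  w 0%N = 0 -> (forall j, (j.+2 <= N)%N -> w j.+2 = c * w j.+1 - w j) ->
  forall k, (k <= N)%N -> w k = w 1%N * cheb c k.
Proof.
move=> w0 wrec; elim/nat_ind2 => [||k IHk IHk1] le_k2N; rewrite ?w0 ?mulr0 ?mulr1 //.
have le_k1N := ltnW le_k2N; have le_kN := ltnW le_k1N.
by rewrite wrec // IHk // IHk1 // chebSS; ring.
Qed.

Lemma cheb_geom x y k : x * y = 1 -> (x - y) * cheb (x + y) k = x ^+ k - y ^+ k.
Proof.
move=> xy1; elim/nat_ind2: k => [||k IHk IHk1]; first by rewrite mulr0 subrr.
  by rewrite mulr1 !expr1.
rewrite chebSS mulrBr mulrCA IHk1 IHk -[X in _ - X]mul1r -xy1.
by rewrite !exprS; ring.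
Qed.

Lemma cheb_opp c k : cheb (- c) k = (-1) ^+ k.+1 * cheb c k.
Proof.
elim/nat_ind2: k => [||k IHk IHk1]; first by rewrite mulr0.
  by rewrite sqrrN expr1n mul1r.
by rewrite !chebSS IHk IHk1 !exprS; ring.
Qed.

Lemma cheb_two k : cheb (2 : R) k = k%:R.
Proof.
elim/nat_ind2: k => [||k IHk IHk1] //.
by rewrite chebSS IHk IHk1 -[k.+2]addn2 -[k.+1]addn1 !natrD; ring.
Qed.

(* Cassini's identity: the companion matrix of the recurrence has det 1. *)
Lemma cheb_cassini c k :
  cheb c k.+1 ^+ 2 - c * cheb c k * cheb c k.+1 + cheb c k ^+ 2 = 1.
Proof.
elim: k => [|k IHk]; first by rewrite mulr0 mul0r subr0 expr0n addr0 expr1n.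
by rewrite chebSS -IHk; ring.
Qed.

End ChebyshevIdentities.

Lemma size_cheb_X (R : nzRingType) k : size (cheb ('X : {poly R}) k.+1) = k.+1.
Proof.
elim/nat_ind2: k => [||k IHk IHk1]; first by rewrite size_poly1.
  by rewrite chebSS mulr1 subr0 size_polyX.
have nz_k2 : cheb ('X : {poly R}) k.+2 != 0 by rewrite -size_poly_eq0 IHk1.
rewrite chebSS -(commr_polyX (cheb _ _)) size_polyDl size_mulX // IHk1 //.
by rewrite size_polyN IHk.
Qed.

(* Part 4: the zeros of U_(m+1) via a primitive 2(m+1)-th root of unity. *)
Section RootsOfUnity.
Variables (K : fieldType) (m : nat) (theta : K).
Hypothesis theta_prim : (2 * m.+1).-primitive_root theta.

Lemma prim_root_half : theta ^+ m.+1 = -1.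
Proof.
have : (theta ^+ m.+1) ^+ 2 == 1 by rewrite -exprM mulnC prim_expr_order.
rewrite sqrf_eq1 => /orP [|/eqP //].
rewrite -(expr0 theta) (eq_prim_root_expr theta_prim) mod0n modn_small; lia.
Qed.

Lemma prim_root_neq0 k : theta ^+ k != 0.
Proof. by rewrite expf_neq0 // (prim_root_eq0 theta_prim) muln_eq0. Qed.

(* With z = theta^i: (z - 1/z) U_(m+1)(z + 1/z) = z^(m+1) - z^-(m+1) = 0,
   and z - 1/z != 0 as z^2 != 1. *)
Lemma cheb_prim_root i : (1 <= i <= m)%N -> cheb (theta ^+ i + theta ^- i) m.+1 = 0.
Proof.
move=> le1im; set z := theta ^+ i.
have zV1 : z * z^-1 = 1 by rewrite mulfV ?prim_root_neq0.
have zm : z ^+ m.+1 = (-1) ^+ i by rewrite -exprM mulnC exprM prim_root_half.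
have /eqP := cheb_geom m.+1 zV1.
rewrite exprVn zm invr_sign subrr mulf_eq0 => /orP [|/eqP //].
rewrite subr_eq0 => /eqP zzV; have : z ^+ 2 = 1 by rewrite expr2 {2}zzV.
rewrite -exprM -(expr0 theta) => /eqP; rewrite (eq_prim_root_expr theta_prim).
rewrite mod0n modn_small; lia.
Qed.

(* These m roots are distinct: x + 1/x = y + 1/y iff x = y or x y = 1. *)
Lemma prim_root_sum_inj i j : (1 <= i <= m)%N -> (1 <= j <= m)%N ->
  theta ^+ i + theta ^- i = theta ^+ j + theta ^- j -> i = j.
Proof.
move=> le1im le1jm; set x := theta ^+ i; set y := theta ^+ j => xy.
have : (x - y) * (x * y - 1) == 0.
  have -> : (x - y) * (x * y - 1) = (x * y) * ((x + x^-1) - (y + y^-1)).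
    by field; rewrite !prim_root_neq0.
  by rewrite xy subrr mulr0.
rewrite mulf_eq0 !subr_eq0 -exprD -(expr0 theta) !(eq_prim_root_expr theta_prim).
by rewrite mod0n !modn_small; lia.
Qed.

(* ... hence they are all the roots of the degree-m polynomial U_(m+1). *)
Lemma cheb_zero_prim_root c : cheb c m.+1 = 0 ->
  exists i, [/\ (1 <= i)%N, (i <= m)%N & c = theta ^+ i + theta ^- i].
Proof.
move=> chebc0; set rs := [seq theta ^+ i + theta ^- i | i <- iota 1 m].
suff /mapP [i] : c \in rs.
  by rewrite mem_iota => /andP [le1i ltim] ->; exists i; split=> //; lia.
apply/negPn/negP => c_rs.
have rootP (x : K) : root (cheb 'X m.+1) x = (cheb x m.+1 == 0).
  by rewrite /root -horner_evalE (rmorph_cheb (horner_eval x)) /= horner_evalE hornerX.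
suff : (size (c :: rs) < size (cheb ('X : {poly K}) m.+1))%N.
  by rewrite size_cheb_X /= size_map size_iota ltnn.
apply: max_poly_roots => /=.
- by rewrite -size_poly_eq0 size_cheb_X.
- rewrite rootP chebc0 eqxx /=; apply/allP => x /mapP [i].
  by rewrite mem_iota rootP => le1im ->; rewrite cheb_prim_root //; lia.
- rewrite c_rs map_inj_in_uniq ?iota_uniq // => i j.
  by rewrite !mem_iota => le1i le1j; apply: prim_root_sum_inj; lia.
Qed.

End RootsOfUnity.

(* Part 3: characteristic p.  First, the iterated Frobenius x |-> x^(p^r)
   is additive on commuting elements of any ring of characteristic p. *)
Section IteratedFrobenius.
Variables (R : nzRingType) (p : nat).
Hypothesis pcharRp : p \in [pchar R].
Implicit Types x y : R.

Lemma commrXX x y m n : GRing.comm x y -> GRing.comm (x ^+ m) (y ^+ n).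
Proof. by move=> cxy; apply/commrX/commr_sym/commrX/commr_sym. Qed.

Lemma exprD_pchar_pow x y r : GRing.comm x y ->
  (x + y) ^+ (p ^ r) = x ^+ (p ^ r) + y ^+ (p ^ r).
Proof.
move=> cxy; elim: r => [|r IHr]; first by rewrite !expr1.
rewrite expnSr !exprM IHr -!(pFrobenius_autE pcharRp) pFrobenius_autD_comm //.
exact: commrXX.
Qed.

Lemma exprB_pchar_pow x y r : GRing.comm x y ->
  (x - y) ^+ (p ^ r) = x ^+ (p ^ r) - y ^+ (p ^ r).
Proof.
move=> cxy; elim: r => [|r IHr]; first by rewrite !expr1.
rewrite expnSr !exprM IHr -!(pFrobenius_autE pcharRp) pFrobenius_autB_comm //.
exact: commrXX.
Qed.

Lemma natr_pchar_pow n r : (n%:R : R) ^+ (p ^ r) = n%:R.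
Proof.
elim: r => [|r IHr]; first by rewrite expr1.
by rewrite expnSr exprM IHr -(pFrobenius_autE pcharRp) pFrobenius_aut_nat.
Qed.

End IteratedFrobenius.

(* The companion matrix [[c, -1], [1, 0]] of the recurrence of U. *)
Definition cheb_mx (R : pzRingType) (c : R) : 'M[R]_2 :=
  \matrix_(i < 2, j < 2)
    if i == 0 then (if j == 0 then c else -1) else (if j == 0 then 1 else 0).

Section ChebyshevMatrix.
Variables (R : comNzRingType) (c : R).
Local Notation M := (cheb_mx c).

Lemma cheb_mx_sqr : M ^+ 2 = c%:M * M - 1.
Proof.
rewrite expr2 -!mulmxE mul_scalar_mx; apply/matrixP => i j.
rewrite !mxE !big_ord_recl big_ord0 !mxE.
by case: i => [[|[|i]] //= ?]; case: j => [[|[|j]] //= ?]; ring.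
Qed.

Lemma cheb_mx_pow k : M ^+ k.+1 = (cheb c k.+1)%:M * M - (cheb c k)%:M.
Proof.
elim: k => [|k IHk]; first by rewrite expr1 cheb1 -mulmxE mul1mx cheb0 raddf0 subr0.
rewrite exprSr IHk mulrBl -mulrA -expr2 cheb_mx_sqr mulrBr mulr1 mulrA.
by rewrite -!mulmxE -scalar_mxM !mulmxE chebSS raddfB mulrBl mulrC addrAC.
Qed.

Lemma cheb_mx_pow_entry k : (M ^+ k) 1 0 = cheb c k.
Proof.
case: k => [|k]; first by rewrite expr0 cheb0 mxE.
by rewrite cheb_mx_pow -mulmxE mul_scalar_mx !mxE /= mulr1 subr0.
Qed.

End ChebyshevMatrix.

Section ChebyshevCharP.
Variables (K : fieldType) (p : nat).
Hypothesis pcharKp : p \in [pchar K].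

Let pcharMp : p \in [pchar 'M[K]_2].
Proof. by rewrite (pchar_lalg 'M[K]_2). Qed.

Let pexp_gt0 r : (0 < p ^ r)%N.
Proof. by rewrite expn_gt0 prime_gt0 // (pcharf_prime pcharKp). Qed.

(* U_(k p^r) = U_k^(p^r) U_(p^r): apply Frobenius to M^k = U_k M - U_(k-1). *)
Lemma cheb_mul_pchar (c : K) r k :
  cheb c (k * p ^ r) = cheb c k ^+ (p ^ r) * cheb c (p ^ r).
Proof.
case: k => [|k]; first by rewrite mul0n cheb0 expr0n (gtn_eqF (pexp_gt0 r)) mul0r.
rewrite -[LHS]cheb_mx_pow_entry -(cheb_mx_pow_entry c (p ^ r)) exprM cheb_mx_pow.
rewrite (exprB_pchar_pow pcharMp) ?exprMn_comm; last exact: comm_mx_scalar.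
- by rewrite -!rmorphXn -!mulmxE !mul_scalar_mx !mxE /= mulr0n subr0.
- exact/commr_sym/comm_mx_scalar.
Qed.

(* If p^r = k + 1 and U_(p^r)(c) = 0, then e = -U_k(c) satisfies e^2 = 1
   (Cassini) and M^(p^r) = e; as M and N = c - M are mutually inverse,
   Frobenius applied to c = M + N gives c^(p^r) = e + 1/e = 2 e. *)
Lemma frob_cheb_zero (c : K) r k : (p ^ r)%N = k.+1 -> cheb c k.+1 = 0 ->
  c ^+ (p ^ r) = 2 * - cheb c k /\ (- cheb c k) ^+ 2 = 1.
Proof.
move=> def_q chebq0; set e := - cheb c k.
have e2 : e ^+ 2 = 1.
  by have := cheb_cassini c k; rewrite chebq0 expr0n mulr0 subr0 add0r sqrrN.
split=> //; set M := cheb_mx c; set N := c%:M - M.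
have Mq : M ^+ (p ^ r) = e%:M by rewrite def_q cheb_mx_pow chebq0 raddf0 mul0r sub0r -raddfN.
have MN : M * N = 1.
  by rewrite mulrBr -expr2 cheb_mx_sqr [M * _]comm_mx_scalar opprB addrC subrK.
have NM : N * M = 1 by rewrite mulrBl -expr2 cheb_mx_sqr opprB addrC subrK.
have cMN : GRing.comm M N by rewrite /GRing.comm MN NM.
have Nq : N ^+ (p ^ r) = e%:M.
  have ee : e%:M * e%:M = 1 :> 'M[K]_2 by rewrite -mulmxE -scalar_mxM -expr2 e2.
  have MNq : M ^+ (p ^ r) * N ^+ (p ^ r) = 1 by rewrite -(exprMn_comm _ cMN) MN expr1n.
  by rewrite -[LHS]mul1r -ee -mulrA -Mq MNq mulr1.
have := exprD_pchar_pow pcharMp r cMN.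
rewrite [M + N]addrC subrK -rmorphXn Mq Nq -raddfD => /matrixP /(_ 0 0).
by rewrite !mxE /= !mulr1n => ->; rewrite mulr2n mulrDl mul1r.
Qed.

(* For odd p, U_(p^r)(c) = 0 only for c = 2 or c = -2: by Frobenius
   (c - 2 e)^(p^r) = c^(p^r) - 2 e^(p^r) = 0, using e^(p^r) = e. *)
Lemma cheb_pchar_root (c : K) r : odd p -> cheb c (p ^ r) = 0 -> c = 2 \/ c = -2.
Proof.
move=> odd_p; have [k def_q] : exists k, (p ^ r)%N = k.+1.
  by exists (p ^ r).-1; rewrite prednK ?pexp_gt0.
rewrite def_q => chebq0; have [cq e2] := frob_cheb_zero def_q chebq0.
set e := - cheb c k in cq e2.
have e_frob : e ^+ (p ^ r) = e.
  rewrite -(odd_double_half (p ^ r)) oddX odd_p orbT add1n exprS -muln2 mulnC exprM e2.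
  by rewrite expr1n mulr1.
have : (c - 2 * e) ^+ (p ^ r) == 0.
  by rewrite (exprB_pchar_pow pcharKp _ (mulrC _ _)) exprMn natr_pchar_pow // e_frob cq subrr.
rewrite expf_eq0 pexp_gt0 subr_eq0 => /eqP ->.
by move/eqP: e2; rewrite sqrf_eq1 => /orP [] /eqP ->; [left | right]; rewrite ?mulr1 ?mulrN1.
Qed.

(* Consequently, for n + 1 = p^r (m + 1) with r >= 1 (so p | n + 1, which
   makes U_(n+1)(+-2) = +-(n+1) vanish), the zeros of U_(n+1) are +-2 and
   the zeros of U_(m+1). *)
Lemma cheb_pchar_zero (c : K) r m : odd p -> (0 < r)%N ->
  cheb c (p ^ r * m.+1) = 0 <-> [\/ c = 2, c = -2 | cheb c m.+1 = 0].
Proof.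
move=> odd_p r_gt0; rewrite mulnC.
have N_eq0 : ((m.+1 * p ^ r)%:R : K) = 0.
  apply/eqP; rewrite -(dvdn_pcharf pcharKp) dvdn_mull //.
  by rewrite -[X in (X %| _)%N]expn1 dvdn_exp2l.
split=> [|[->|->|chebc0]]; last first.
- by rewrite cheb_mul_pchar chebc0 expr0n gtn_eqF ?pexp_gt0 // mul0r.
- by rewrite cheb_opp cheb_two N_eq0 mulr0.
- by rewrite cheb_two.
rewrite cheb_mul_pchar => /eqP; rewrite mulf_eq0 expf_eq0 pexp_gt0 /=.
case/orP => /eqP; first by constructor 3.
by case/cheb_pchar_root=> // ->; [constructor 1 | constructor 2].
Qed.

End ChebyshevCharP.

(* Part 2: eigenvalues of the tridiagonal Toeplitz matrix. *)
Section TridiagonalToeplitz.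
Variable K : fieldType.
Implicit Types (al be : K).

Lemma hatT_row_mul n al be (w : nat -> K) (j : 'I_n) : w 0%N = 0 ->
  ((\row_(k < n) w k.+1) *m hatT n al be) 0 j =
  al * w j.+1 + be * w j + (if (j.+1 < n)%N then be * w j.+2 else 0).
Proof.
move=> w0; rewrite mxE.
have entry (k : 'I_n) : w k.+1 * hatT n al be k j =
    (if k == j :> nat then al * w k.+1 else 0)
  + (if k.+1 == j :> nat then be * w k.+1 else 0)
  + (if k == j.+1 :> nat then be * w k.+1 else 0).
  rewrite !mxE -(inj_eq val_inj) /= [(j.+1 == _)]eq_sym.
  by do 3 (case: eqP => ? /=);
    rewrite ?mulr0 ?addr0 ?add0r ?[al * _]mulrC ?[be * _]mulrC //; lia.
have delta (F : nat -> K) i :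
    \sum_(k < n) (if k == i :> nat then F k else 0) = if (i < n)%N then F i else 0.
  by rewrite -big_mkcond big_ord1_eq.
under eq_bigr => k _ do rewrite mxE entry.
rewrite !big_split /= (delta (fun k => al * w k.+1)) (delta (fun k => be * w k.+1)) ltn_ord.
congr (_ + _ + _); clear entry; case: j => [[|j] lt_jn] /=; first by rewrite big1 ?w0 ?mulr0.
by rewrite (delta (fun k => be * w k.+1)) ltnW.
Qed.

Definition cheb_row (c : K) n : 'rV[K]_n := \row_(k < n) cheb c k.+1.

(* Throughout, c = -al/be, so that the kernel equations read
   w_(j+2) = c w_(j+1) - w_j. *)
Section Kernel.
Variables (n : nat) (al be c : K).
Hypothesis nz_be : be != 0.
Hypothesis al_def : al = - be * c.

Lemma cheb_row_hatT (j : 'I_n.+1) :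
  (cheb_row c n.+1 *m hatT n.+1 al be) 0 j =
  if (j < n)%N then 0 else - be * cheb c n.+2.
Proof.
rewrite hatT_row_mul // ltnS; case: ltnP => [lt_jn|le_nj].
  by rewrite chebSS al_def; ring.
have -> : (j : nat) = n by apply/eqP; rewrite eqn_leq le_nj -ltnS ltn_ord.
by rewrite addr0 chebSS al_def; ring.
Qed.

Lemma hatT_kernel (v : 'rV[K]_n.+1) :
  v *m hatT n.+1 al be = 0 -> v = v 0 0 *: cheb_row c n.+1.
Proof.
move=> vT0; pose w k := if k is k'.+1 then v 0 (inord k') else 0.
have v_w : v = \row_(k < n.+1) w k.+1 by apply/rowP => k; rewrite mxE /= inord_val.
have w_rec j : (j.+2 <= n.+1)%N -> w j.+2 = c * w j.+1 - w j.
  move=> le_jn; have /rowP /(_ (inord j)) := vT0.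
  rewrite {1}v_w hatT_row_mul; last by [].
  rewrite mxE inordK ?le_jn; last exact: ltnW.
  move=> eq0; have : be * (w j.+2 - (c * w j.+1 - w j)) = 0 by rewrite -eq0 al_def; ring.
  by move/eqP; rewrite mulf_eq0 (negbTE nz_be) subr_eq0 => /eqP.
have w_cheb := @cheb_rec_unique _ c w n.+1 (erefl _) w_rec.
by apply/rowP => k; rewrite v_w !mxE w_cheb // mulrC.
Qed.

Lemma det_hatT_eq0 : (\det (hatT n.+1 al be) == 0) = (cheb c n.+2 == 0).
Proof.
apply/idP/idP => [/det0P [v nz_v vT0] | /eqP chebc0].
  have v00 : v 0 0 != 0.
    by apply: contraNneq nz_v => v0; rewrite (hatT_kernel vT0) v0 scale0r.
  have /rowP /(_ ord_max) := vT0.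
  rewrite (hatT_kernel vT0) -scalemxAl mxE cheb_row_hatT [RHS]mxE ltnn => /eqP.
  by rewrite mulf_eq0 (negbTE v00) mulf_eq0 oppr_eq0 (negbTE nz_be).
apply/det0P; exists (cheb_row c n.+1).
  by apply/eqP => /rowP /(_ 0); rewrite !mxE cheb1 => /eqP; rewrite oner_eq0.
by apply/rowP => j; rewrite cheb_row_hatT chebc0 mulr0 [RHS]mxE if_same.
Qed.

End Kernel.

Lemma hatT_sub_scalar n al be la : hatT n al be - la%:M = hatT n (al - la) be.
Proof.
by apply/matrixP => i j; rewrite !mxE; case: eqP => _; rewrite ?mulr1n ?mulr0n ?subr0.
Qed.

(* la is an eigenvalue of \hat T_(n+1)(al,be) iff U_(n+2)((al - la)/be) = 0;
   the sign of c is irrelevant since U_k(-c) = +-U_k(c). *)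
Lemma det_hatT_sub_scalar_eq0 n al be la : be != 0 ->
  (\det (hatT n.+1 al be - la%:M) == 0) = (cheb ((al - la) / be) n.+2 == 0).
Proof.
move=> nz_be; rewrite hatT_sub_scalar (@det_hatT_eq0 n _ _ (- ((al - la) / be))) //.
  by rewrite cheb_opp mulf_eq0 signr_eq0.
by field.
Qed.

End TridiagonalToeplitz.

(* Part 1: Massey's criterion. A code with a row-free generator matrix G is
   LCD iff its Gram matrix G G^T is invertible. *)
Lemma LCD_gram (F : fieldType) k N (G : 'M[F]_(k, N)) :
  row_free G -> is_LCD G <-> G *m G^T \in unitmx.
Proof.
rewrite /is_LCD /dual_code => freeG; split=> [capG0 | unitGG].
  rewrite unitmxE unitfE; apply/det0P => -[u nz_u uGG0].
  have : (u *m G <= G :&: kermx G^T)%MS.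
    by rewrite sub_capmx submxMl; apply/sub_kermxP; rewrite -mulmxA.
  by rewrite capG0 submx0 mulmx_free_eq0 // (negbTE nz_u).
apply/eqP; rewrite -submx0.
have /submxP [D defD] : (G :&: kermx G^T <= G)%MS := capmxSl _ _.
have : (G :&: kermx G^T)%MS *m G^T = 0 by apply/sub_kermxP; apply: capmxSr.
rewrite defD -mulmxA => /(congr1 (mulmx^~ (invmx (G *m G^T)))).
by rewrite mulmxK // mul0mx => ->; rewrite mul0mx.
Qed.

Lemma hatT_tr (R : nzRingType) n (a b : R) : (hatT n a b)^T = hatT n a b.
Proof. by apply/matrixP => i j; rewrite !mxE eq_sym orbC. Qed.

Lemma map_hatT (R S : nzRingType) (f : {rmorphism R -> S}) n (a b : R) :
  map_mx f (hatT n a b) = hatT n (f a) (f b).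
Proof.
by apply/matrixP => i j; rewrite !mxE; case: (i == j) => //; case: (_ || _); rewrite ?rmorph0.
Qed.

Lemma hatG_row_free (F : fieldType) n (a b : F) : row_free (hatG n a b).
Proof.
by apply/row_freeP; exists (col_mx 1%:M 0); rewrite mul_row_col mulmx1 mulmx0 addr0.
Qed.

Lemma hatG_gram (R : comNzRingType) n (a b : R) :
  hatG n a b *m (hatG n a b)^T = 1%:M + hatT n a b *m hatT n a b.
Proof. by rewrite tr_row_mx mul_row_col trmx1 mul1mx hatT_tr. Qed.

Lemma addr1_sqr_factor (R : comNzRingType) n (T : 'M[R]_n) (mu : R) :
  mu ^+ 2 = -1 -> 1%:M + T *m T = (T - (- mu)%:M) *m (T - mu%:M).
Proof.
move=> mu2; rewrite mulmxBl !mulmxBr -scalar_mxM mulNr -expr2 mu2 opprK.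
by rewrite scalar_mxC raddfN mulNmx opprB opprK addrA addrAC subrK addrC.
Qed.

Lemma LCD_hatG_iff (F L : fieldType) (iota : {rmorphism F -> L}) n (a b : F)
    (mu : L) : b != 0 -> mu ^+ 2 = -1 ->
  is_LCD (hatG n.+1 a b) <->
  cheb ((iota a - - mu) / iota b) n.+2 <> 0 /\ cheb ((iota a - mu) / iota b) n.+2 <> 0.
Proof.
move=> nz_b mu2; have nz_ib : iota b != 0 by rewrite fmorph_eq0.
rewrite LCD_gram ?hatG_row_free // hatG_gram unitmxE unitfE -(fmorph_eq0 iota).
rewrite -det_map_mx map_mxD map_mx1 map_mxM map_hatT (addr1_sqr_factor _ mu2).
rewrite det_mulmx mulf_eq0 !det_hatT_sub_scalar_eq0 //.
by split=> [/norP [/eqP ? /eqP ?] | [/eqP ? /eqP ?]] //; apply/norP.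
Qed.

(* Parts 3 and 4 restated in the shape of the theorem, for a zero of U at
   (al - s)/be written through al/be = s/be + d. *)
Section ShiftedRoots.
Variables (K : fieldType) (p r : nat) (al be s : K).
Hypotheses (pcharKp : p \in [pchar K]) (odd_p : odd p) (r_gt0 : (0 < r)%N).
Hypothesis nz_be : be != 0.
Let x := (al - s) / be.

Lemma shift_eq d : al / be = s / be + d <-> d = x.
Proof.
split=> [eq_d|->]; last by rewrite /x; field.
by apply: (addrI (s / be)); rewrite -eq_d /x; field.
Qed.

Lemma cheb_shift_zero_iff m (theta : K) : (2 * m.+1).-primitive_root theta ->
  cheb x (p ^ r * m.+1) = 0 <->
  al / be = s / be + 2 \/ al / be = s / be - 2 \/
  exists i, [/\ (1 <= i)%N, (i <= m)%N & al / be = s / be + theta ^+ i + theta ^- i].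
Proof.
move=> theta_prim; rewrite cheb_pchar_zero // !shift_eq; split.
  case=> [<-|<-|/(cheb_zero_prim_root theta_prim) [i [le1i leim x_i]]].
  - by left.
  - by right; left.
  - by right; right; exists i; split=> //; rewrite -addrA shift_eq.
case=> [<-|[<-|[i [le1i leim]]]]; [by constructor 1 | by constructor 2 |].
by rewrite -addrA shift_eq => <-; constructor 3; apply: cheb_prim_root; rewrite ?le1i.
Qed.

Lemma cheb_shift_zero_iff0 :
  cheb x (p ^ r) = 0 <-> al / be = s / be + 2 \/ al / be = s / be - 2.
Proof.
rewrite -[(p ^ r)%N]muln1 cheb_pchar_zero // !shift_eq cheb1.
split=> [[<-|<-|/eqP] | [<-|<-]]; [by left | by right | by rewrite oner_eq0 | |].
- by constructor 1.
- by constructor 2.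
Qed.

End ShiftedRoots.

Unset Implicit Arguments.

Theorem theorem2p10
  (F : finFieldType) (p : nat) (Hp : prime p) (Hodd : odd p)
  (HcharF : p \in [pchar F])
  (a b : F) (Hb : b != 0)
  (n : nat) (Hn : (2 <= n)%N)
  (r m : nat)
  (Hr1 : (p ^ r %| n.+1)%N) (Hr2 : ~~ (p ^ r.+1 %| n.+1)%N)
  (Hm : n.+1 = (p ^ r * m.+1)%N)
  (Hr : (1 <= r)%N)
  (L : fieldType) (iota : {rmorphism F -> L})
  (mu : L) (Hmu : mu ^+ 2 = -1) :
  ((0 < m)%N ->
   forall theta : L, (2 * m.+1).-primitive_root theta ->
   (is_LCD (hatG n a b) <->
    ~ (iota (a / b) = - mu / iota b + 2
       \/ iota (a / b) = - mu / iota b - 2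
       \/ iota (a / b) = mu / iota b + 2
       \/ iota (a / b) = mu / iota b - 2
       \/ (exists i : nat, [/\ (1 <= i)%N, (i <= m)%N &
            iota (a / b) = - mu / iota b + theta ^+ i + theta ^- i])
       \/ (exists i : nat, [/\ (1 <= i)%N, (i <= m)%N &
            iota (a / b) = mu / iota b + theta ^+ i + theta ^- i]))))
  /\
  (m = 0%N ->
   (is_LCD (hatG n a b) <->
    ~ (iota (a / b) = - mu / iota b + 2
       \/ iota (a / b) = - mu / iota b - 2
       \/ iota (a / b) = mu / iota b + 2
       \/ iota (a / b) = mu / iota b - 2))).
Proof.
case: n Hn Hr1 Hr2 Hm => [//|n] _ _ _ Hm.
have pcharLp : p \in [pchar L] := rmorph_pchar iota HcharF.
have nz_ib : iota b != 0 by rewrite fmorph_eq0.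
have := @LCD_hatG_iff _ _ iota n a b mu Hb Hmu; rewrite Hm fmorph_div => LCD_iff.
split=> [_ theta theta_prim | m0].
  have := cheb_shift_zero_iff (iota a) (- mu) pcharLp Hodd Hr nz_ib theta_prim.
  have := cheb_shift_zero_iff (iota a) mu pcharLp Hodd Hr nz_ib theta_prim.
  tauto.
subst m; rewrite muln1 in LCD_iff.
have := cheb_shift_zero_iff0 (iota a) (- mu) pcharLp Hodd Hr nz_ib.
have := cheb_shift_zero_iff0 (iota a) mu pcharLp Hodd Hr nz_ib.
tauto.
Qed.
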